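(* Let $R$ be an incline with $|R|\geq 2$. Then $R$ is $k$-simple if and only if $R$ is isomorphic to $R_0$ or to $R_1$, where $R_0$ and $R_1$ are the semirings on $\{0,1\}$ with addition $0+0=0$, $0+1=1+0=1+1=1$, and multiplication: in $R_0$, $xy=0$ for all $x,y$; in $R_1$, $1\cdot 1=1$ and $xy=0$ otherwise.
   Context: A semiring $(R,+,\cdot)$ is a set with two binary operations such that $(R,+)$ is a commutative semigroup, $(R,\cdot)$ is a semigroup, and multiplication distributes over addition from both sides; no zero or identity is assumed. An incline is a semiring with $r+r=r$ for all $r$ and $x+xy=x=x+yx$ for all $x,y\in R$. A zero of $R$ is an element $0$ with $0+r=r$ and $0r=r0=0$ for all $r\in R$. An ideal of $R$ is a nonempty subset $A\subseteq R$ with $a+b\in A$ and $ra,ar\in A$ for all $a,b\in A$, $r\in R$; the trivial ideals are $R$ and, if $R$ has a zero $0$, $\{0\}$. For an ideal $A$, its $k$-closure is $\overline{A}=\{x\in R\mid x+a=b \text{ for some } a,b\in A\}$, and $A$ is a $k$-ideal if $A=\overline{A}$. $R$ is $k$-simple if it has no $k$-ideals other than the trivial ideals. *)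

Record Semiring : Type := {
  carrier :> Type;
  sadd : carrier -> carrier -> carrier;
  smul : carrier -> carrier -> carrier;
  sadd_comm : forall x y, sadd x y = sadd y x;
  sadd_assoc : forall x y z, sadd x (sadd y z) = sadd (sadd x y) z;
  smul_assoc : forall x y z, smul x (smul y z) = smul (smul x y) z;
  smul_distr_l : forall x y z, smul x (sadd y z) = sadd (smul x y) (smul x z);
  smul_distr_r : forall x y z, smul (sadd x y) z = sadd (smul x z) (smul y z)
}.

Arguments sadd {s} _ _.
Arguments smul {s} _ _.

Definition is_incline (R : Semiring) : Prop :=
  (forall r : R, sadd r r = r) /\
  (forall x y : R, sadd x (smul x y) = x /\ sadd x (smul y x) = x).

Definition is_zero (R : Semiring) (z : R) : Prop :=
  forall r : R, sadd z r = r /\ smul z r = z /\ smul r z = z.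

Definition is_ideal (R : Semiring) (A : R -> Prop) : Prop :=
  (exists a, A a) /\
  (forall a b, A a -> A b -> A (sadd a b)) /\
  (forall r a, A a -> A (smul r a) /\ A (smul a r)).

Definition kclosure (R : Semiring) (A : R -> Prop) : R -> Prop :=
  fun x => exists a b, A a /\ A b /\ sadd x a = b.

Definition is_kideal (R : Semiring) (A : R -> Prop) : Prop :=
  is_ideal R A /\ (forall x, A x <-> kclosure R A x).

Definition is_trivial_ideal (R : Semiring) (A : R -> Prop) : Prop :=
  (forall x, A x) \/ (exists z, is_zero R z /\ forall x, A x <-> x = z).

Definition k_simple (R : Semiring) : Prop :=
  forall A : R -> Prop, is_kideal R A -> is_trivial_ideal R A.

Definition semiring_iso (R S : Semiring) (f : R -> S) : Prop :=
  (forall x y, f (sadd x y) = sadd (f x) (f y)) /\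
  (forall x y, f (smul x y) = smul (f x) (f y)) /\
  (forall x y, f x = f y -> x = y) /\
  (forall s, exists x, f x = s).

Definition isomorphic (R S : Semiring) : Prop := exists f : R -> S, semiring_iso R S f.

(* The two-element semirings on {0,1} (false = 0, true = 1): addition is "or". *)
Definition R0 : Semiring.
Proof.
  refine {| carrier := bool; sadd := orb; smul := fun _ _ => false |};
    intros; repeat match goal with b : bool |- _ => destruct b end; reflexivity.
Defined.

Definition R1 : Semiring.
Proof.
  refine {| carrier := bool; sadd := orb; smul := andb |};
    intros; repeat match goal with b : bool |- _ => destruct b end; reflexivity.
Defined.

(** In an incline every principal down-set [{y | y + x = x}] is a k-ideal.
    So in a k-simple incline each element is either the top (its down-set is
    all of [R]) or the zero (its down-set is [{0}]); with two distinct elements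
    this leaves exactly a zero [0] and a top [1], and the product [1 * 1 ∈ {0, 1}]
    decides between [R0] and [R1].  Conversely, in a two-element semiring with a
    zero and a top, a k-ideal containing the top contains everything, since
    [x + 1 = 1]; any other k-ideal is [{0}]. *)

From Stdlib Require Import Classical ClassicalEpsilon.

Definition is_top (R : Semiring) (t : R) : Prop := forall y : R, sadd y t = t.

Definition two_point (R : Semiring) (z t : R) : Prop :=
  is_zero R z /\ is_top R t /\ z <> t /\ forall x : R, x = z \/ x = t.

Section Incline.
Variable R : Semiring.
Hypothesis incl : is_incline R.

Lemma down_set_kideal (x : R) : is_kideal R (fun y => sadd y x = x).
Proof.
  destruct incl as [idem absorb].
  split; [split; [|split] |].
  - exists x; apply idem.
  - intros a b Ha Hb; rewrite <- sadd_assoc, Hb; exact Ha.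
  - intros r a Ha; cbv beta in *; split; rewrite <- Ha at 1; rewrite sadd_assoc,
      (sadd_comm _ _ a), ?(proj1 (absorb a r)), ?(proj2 (absorb a r));
      exact Ha.
  - intro y; split.
    + intro Hy; exists x, x; auto.
    + intros [a [b [Ha [Hb E]]]].
      rewrite <- Ha at 1; rewrite sadd_assoc, E; exact Hb.
Qed.

Lemma k_simple_top_or_zero :
  k_simple R -> forall x : R, is_top R x \/ is_zero R x.
Proof.
  intros Hk x.
  destruct (Hk _ (down_set_kideal x)) as [Htop | [z [Hz Hdown]]].
  - left; exact Htop.
  - right.
    assert (x = z) as -> by (apply Hdown, (proj1 incl)).
    exact Hz.
Qed.

End Incline.

Section TopZero.
Variable R : Semiring.

Lemma top_unique (t t' : R) : is_top R t -> is_top R t' -> t = t'.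
Proof. intros Ht Ht'; rewrite <- (Ht t'), sadd_comm; apply Ht'. Qed.

Lemma zero_unique (z z' : R) : is_zero R z -> is_zero R z' -> z = z'.
Proof.
  intros Hz Hz'; rewrite <- (proj1 (Hz z')), sadd_comm; exact (eq_sym (proj1 (Hz' z))).
Qed.

Lemma zero_top_cover (z t : R) :
  is_zero R z -> is_top R t ->
  (forall x : R, is_top R x \/ is_zero R x) -> forall x : R, x = z \/ x = t.
Proof.
  intros Hz Ht Hcover x.
  destruct (Hcover x) as [Hx | Hx].
  - right; exact (top_unique x t Hx Ht).
  - left; exact (zero_unique x z Hx Hz).
Qed.

Lemma top_or_zero_two_point (u v : R) :
  u <> v -> (forall x : R, is_top R x \/ is_zero R x) ->
  exists z t : R, two_point R z t.
Proof.
  intros Huv Hcover.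
  assert (Hpair : forall z t, is_zero R z -> is_top R t -> two_point R z t).
  { intros z t Hz Ht; split; [exact Hz | split; [exact Ht | split]].
    - intro E; subst t; apply Huv.
      destruct (zero_top_cover z z Hz Ht Hcover u) as [-> | ->],
        (zero_top_cover z z Hz Ht Hcover v) as [-> | ->]; reflexivity.
    - apply (zero_top_cover z t Hz Ht Hcover). }
  destruct (Hcover u) as [Hu | Hu], (Hcover v) as [Hv | Hv].
  - exfalso; exact (Huv (top_unique u v Hu Hv)).
  - exists v, u; auto.
  - exists u, v; auto.
  - exfalso; exact (Huv (zero_unique u v Hu Hv)).
Qed.

Lemma two_point_k_simple (z t : R) : two_point R z t -> k_simple R.
Proof.
  intros [Hz [Ht [Hzt Hcover]]] A [[[a Ha] _] Hclosed].
  destruct (classic (A t)) as [At | nAt].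
  - left; intro x; apply Hclosed; exists t, t; auto.
  - right; exists z; split; [exact Hz|]; intro x; split.
    + intro Ax; destruct (Hcover x) as [-> | ->]; tauto.
    + intros ->; destruct (Hcover a) as [<- | ->]; tauto.
Qed.

End TopZero.

Lemma two_point_iso (R S : Semiring) (z t : R) (s0 s1 : S) :
  two_point R z t -> two_point S s0 s1 ->
  (smul t t = t <-> smul s1 s1 = s1) -> isomorphic R S.
Proof.
  intros [Hz [Ht [Hzt Hcover]]] [Hs0 [Hs1 [Hs01 HcoverS]]] Htt.
  pose (g := fun x : R => if excluded_middle_informative (x = t) then s1 else s0).
  assert (g_t : g t = s1) by (unfold g; destruct excluded_middle_informative; congruence).
  assert (g_z : g z = s0) by (unfold g; destruct excluded_middle_informative; congruence).
  assert (g_tt : g (smul t t) = smul s1 s1).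
  { destruct (Hcover (smul t t)) as [E | E]; rewrite E.
    - destruct (HcoverS (smul s1 s1)) as [-> | E']; [exact g_z|].
      exfalso; apply Hzt; rewrite <- E; tauto.
    - rewrite g_t; symmetry; tauto. }
  exists g; repeat split.
  - intros x y; destruct (Hcover x) as [-> | ->], (Hcover y) as [-> | ->];
      rewrite ?(sadd_comm _ t z), ?(proj1 (Hz _)), ?(Ht _), ?g_z, ?g_t,
        ?(sadd_comm _ s1 s0), ?(proj1 (Hs0 _)), ?(Hs1 _);
      reflexivity.
  - intros x y; destruct (Hcover x) as [-> | ->], (Hcover y) as [-> | ->];
      rewrite ?(proj1 (proj2 (Hz _))), ?(proj2 (proj2 (Hz _))), ?g_z, ?g_t,
        ?(proj1 (proj2 (Hs0 _))), ?(proj2 (proj2 (Hs0 _)));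
      auto.
  - intros x y; destruct (Hcover x) as [-> | ->], (Hcover y) as [-> | ->];
      rewrite ?g_z, ?g_t; congruence.
  - intro s; destruct (HcoverS s) as [-> | ->]; eauto.
Qed.

Lemma iso_reflects_two_point (R S : Semiring) (f : R -> S) (s0 s1 : S) :
  semiring_iso R S f -> two_point S s0 s1 -> exists z t : R, two_point R z t.
Proof.
  intros [fadd [fmul [finj fsurj]]] [Hs0 [Hs1 [Hs01 HcoverS]]].
  destruct (fsurj s0) as [z fz], (fsurj s1) as [t ft].
  exists z, t; repeat split.
  - apply finj; rewrite fadd, fz; apply Hs0.
  - apply finj; rewrite fmul, fz; apply Hs0.
  - apply finj; rewrite fmul, fz; apply Hs0.
  - intro y; apply finj; rewrite fadd, ft; apply Hs1.
  - intros ->; congruence.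
  - intro x; destruct (HcoverS (f x)) as [E | E]; [left | right];
      apply finj; congruence.
Qed.

Lemma R0_two_point : two_point R0 false true.
Proof.
  split; [|split; [|split]]; try discriminate; intros []; auto; split; reflexivity.
Qed.

Lemma R1_two_point : two_point R1 false true.
Proof.
  split; [|split; [|split]]; try discriminate; intros []; auto; split; reflexivity.
Qed.

Theorem theorem5p4 (R : Semiring) :
  is_incline R ->
  (exists x y : R, x <> y) ->
  (k_simple R <-> (isomorphic R R0 \/ isomorphic R R1)).
Proof.
  intros incl [u [v Huv]]; split.
  - intro Hk.
    destruct (top_or_zero_two_point R u v Huv (k_simple_top_or_zero R incl Hk))
      as [z [t Hzt]].
    pose proof Hzt as [_ [_ [Hneq Hcover]]].
    destruct (Hcover (smul t t)) as [E | E].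
    + left; apply (two_point_iso R R0 z t false true Hzt R0_two_point).
      split; [congruence | discriminate].
    + right; apply (two_point_iso R R1 z t false true Hzt R1_two_point).
      tauto.
  - intros [[f Hf] | [f Hf]];
      [ destruct (iso_reflects_two_point R R0 f false true Hf R0_two_point)
          as [z [t Hzt]]
      | destruct (iso_reflects_two_point R R1 f false true Hf R1_two_point)
          as [z [t Hzt]] ];
      exact (two_point_k_simple R z t Hzt).
Qed.
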